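(* For all $m,n\in\mathbf{N}_0$, $$ \left[{n+m+1}\atop{m+1}\right]_q=\sum_{j=0}^{n}q^{(m+1)j}\left[{n+m-j}\atop{m}\right]_q, $$ $$ \left[{n+m+2}\atop{m+2}\right]_q=\frac12\sum_{\substack{j,k\ge 0\\ j+k\le n}}\left[{n+m-j-k}\atop{m}\right]_q\,q^{\,n-(j+k)}\left(q^{(m+2)j}+q^{(m+2)k}\right). $$
   Context: Here $q$ is a variable (e.g. $0<q<1$), $(q)_j:=(1-q)(1-q^2)\cdots(1-q^j)$ for $j\in\mathbf{N}$, $(q)_0:=1$, and $\left[{n}\atop{k}\right]_q:=\dfrac{(q)_n}{(q)_k\,(q)_{n-k}}$ denotes the $q$-binomial coefficient (Gaussian polynomial) for integers $0\le k\le n$. $\mathbf{N}_0=\{0,1,2,\dots\}$. *)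

From mathcomp Require Import all_boot all_order all_algebra.
Set Implicit Arguments. Unset Strict Implicit. Unset Printing Implicit Defensive.
Import Order.TTheory GRing.Theory Num.Theory.
Local Open Scope ring_scope.

Definition qpoch (R : ringType) (q : R) (j : nat) : R :=
  \prod_(1 <= i < j.+1) (1 - q ^+ i).

(* Gaussian binomial [n k]_q := (q)_n / ((q)_k (q)_(n-k)), used for k <= n *)
Definition qbinom (R : fieldType) (q : R) (n k : nat) : R :=
  qpoch q n / (qpoch q k * qpoch q (n - k)).

From mathcomp Require Import all_boot all_order all_algebra.
From mathcomp Require Import zify ring.
Import Order.TTheory GRing.Theory Num.Theory.
Local Open Scope ring_scope.

(* Both q-Pascal rules give, by induction on [n], two expansions of
   [[n+m+1, m+1]] as sums of [[n+m-j, m]]: one with weights q^((m+1)j),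
   one with weights q^(n-j).  The double sum is symmetric in (j, k), so it is
   twice its half with weight q^((m+2)j) only; summing over k with the second
   expansion and then over j with the first (for m+1) gives [[n+m+2, m+2]]. *)

Section QBinomial.
Context {R : fieldType} {q : R}.
Hypothesis qX_neq1 : forall i, q ^+ i.+1 != 1.

Lemma qpoch0 : qpoch q 0 = 1.
Proof. by rewrite /qpoch big_geq. Qed.

Lemma qpochS n : qpoch q n.+1 = qpoch q n * (1 - q ^+ n.+1).
Proof. by rewrite /qpoch big_nat_recr. Qed.

Lemma subr1X_neq0 i : 1 - q ^+ i.+1 != 0.
Proof. by rewrite subr_eq0 eq_sym qX_neq1. Qed.

Lemma qpoch_neq0 n : qpoch q n != 0.
Proof.
elim: n => [|n IHn]; first by rewrite qpoch0 oner_neq0.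
by rewrite qpochS mulf_neq0 ?subr1X_neq0.
Qed.

Lemma qbinomE a b : qbinom q (a + b) a = qpoch q (a + b) / (qpoch q a * qpoch q b).
Proof. by rewrite /qbinom addKn. Qed.

Lemma qbinom_sym n k : (k <= n)%N -> qbinom q n k = qbinom q n (n - k).
Proof.
move=> /subnKC <-; rewrite addKn qbinomE [in RHS]addnC qbinomE.
by rewrite addnC [qpoch q k * _]mulrC.
Qed.

Lemma qbinomnn n : qbinom q n n = 1.
Proof. by have := qbinomE n 0; rewrite addn0 qpoch0 mulr1 divff ?qpoch_neq0. Qed.

Lemma qbinom_pascal_l a b :
  qbinom q (a + b).+2 a.+1
    = q ^+ a.+1 * qbinom q (a + b).+1 a.+1 + qbinom q (a + b).+1 a.
Proof.
have -> : qbinom q (a + b).+2 a.+1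
    = qpoch q (a + b).+2 / (qpoch q a.+1 * qpoch q b.+1).
  by rewrite -addnS -addSn qbinomE.
have -> : qbinom q (a + b).+1 a.+1 = qpoch q (a + b).+1 / (qpoch q a.+1 * qpoch q b).
  by rewrite -addSn qbinomE.
have -> : qbinom q (a + b).+1 a = qpoch q (a + b).+1 / (qpoch q a * qpoch q b.+1).
  by rewrite -addnS qbinomE.
rewrite [qpoch q (a + b).+2]qpochS [qpoch q a.+1]qpochS [qpoch q b.+1]qpochS.
have -> : q ^+ (a + b).+2 = q ^+ a.+1 * q ^+ b.+1 by rewrite -exprD addnS addSn.
by field; rewrite !subr1X_neq0 !qpoch_neq0.
Qed.

(* The first rule read through the symmetry [n, k] = [n, n - k]. *)
Lemma qbinom_pascal_r a b :
  qbinom q (a + b).+2 a.+1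
    = qbinom q (a + b).+1 a.+1 + q ^+ b.+1 * qbinom q (a + b).+1 a.
Proof.
rewrite (@qbinom_sym _ a.+1) 1?(@qbinom_sym _ a.+1) 1?(@qbinom_sym _ a); try lia.
have -> : ((a + b).+2 - a.+1 = b.+1)%N by lia.
have -> : ((a + b).+1 - a.+1 = b)%N by lia.
have -> : ((a + b).+1 - a = b.+1)%N by lia.
by rewrite addnC qbinom_pascal_l addrC.
Qed.

Lemma qbinom_hockey_stick_l m n :
  qbinom q (n + m).+1 m.+1 = \sum_(j < n.+1) q ^+ (m.+1 * j) * qbinom q (n + m - j) m.
Proof.
elim: n => [|n IHn]; first by rewrite big_ord1 muln0 mul1r subn0 !qbinomnn.
rewrite addSn addnC qbinom_pascal_l big_ord_recl muln0 mul1r subn0 addrC.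
rewrite [(m + n)%N]addnC IHn mulr_sumr; congr (_ + _).
by apply: eq_bigr => j _; rewrite mulrA -exprD mulnS addnC.
Qed.

Lemma qbinom_hockey_stick_r m n :
  qbinom q (n + m).+1 m.+1 = \sum_(j < n.+1) q ^+ (n - j) * qbinom q (n + m - j) m.
Proof.
elim: n => [|n IHn]; first by rewrite big_ord1 mul1r subn0 !qbinomnn.
by rewrite addSn addnC qbinom_pascal_r big_ord_recl subn0 [(m + n)%N]addnC IHn addrC.
Qed.

End QBinomial.

Lemma triangle_sum_swap (V : nmodType) n (F : nat -> nat -> V) :
  \sum_(j < n.+1) \sum_(k < n.+1 | (j + k <= n)%N) F j k
  = \sum_(j < n.+1) \sum_(k < n.+1 | (j + k <= n)%N) F k j.
Proof.
under eq_bigr do rewrite big_mkcond.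
rewrite exchange_big; apply: eq_bigr => k _.
by rewrite [RHS]big_mkcond; apply: eq_bigr => j _; rewrite addnC.
Qed.

Lemma triangle_sum_symmetrize (R : numFieldType) n (G : nat -> nat -> R) (a : nat -> R) :
  (forall j k, G j k = G k j) ->
  2^-1 * \sum_(j < n.+1) \sum_(k < n.+1 | (j + k <= n)%N) G j k * (a j + a k)
  = \sum_(j < n.+1) \sum_(k < n.+1 | (j + k <= n)%N) G j k * a j.
Proof.
move=> G_sym.
have -> : \sum_(j < n.+1) \sum_(k < n.+1 | (j + k <= n)%N) G j k * (a j + a k)
    = \sum_(j < n.+1) \sum_(k < n.+1 | (j + k <= n)%N) G j k * a j
    + \sum_(j < n.+1) \sum_(k < n.+1 | (j + k <= n)%N) G j k * a k.
  rewrite -big_split; apply: eq_bigr => j _.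
  by rewrite -big_split; apply: eq_bigr => k _; rewrite mulrDr.
rewrite [X in _ + X](triangle_sum_swap _ _ (fun j k => G j k * a k)) /=.
under [X in _ + X]eq_bigr do under eq_bigr do rewrite G_sym.
by rewrite -mulr2n -[X in _ * X]mulr_natl mulKf ?pnatr_eq0.
Qed.

Lemma triangle_row_sum (V : nmodType) n j (f : nat -> V) : (j <= n)%N ->
  \sum_(k < n.+1 | (j + k <= n)%N) f k = \sum_(k < (n - j).+1) f k.
Proof.
move=> le_jn; rewrite (big_ord_widen n.+1 f) ?ltnS ?leq_subr //.
by apply: eq_bigl => k; rewrite ltnS leq_subRL.
Qed.

Theorem theorem2p3 (R : realFieldType) (q : R) (hq0 : 0 < q) (hq1 : q < 1)
  (m n : nat) :
  qbinom q (n + m + 1) (m + 1)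
    = \sum_(j < n.+1) q ^+ ((m + 1) * j) * qbinom q (n + m - j) m
  /\
  qbinom q (n + m + 2) (m + 2)
    = 2^-1 * \sum_(j < n.+1) \sum_(k < n.+1 | (j + k <= n)%N)
        qbinom q (n + m - j - k) m * q ^+ (n - (j + k))
          * (q ^+ ((m + 2) * j) + q ^+ ((m + 2) * k)).
Proof.
have qX_neq1 i : q ^+ i.+1 != 1 by rewrite lt_eqF // exprn_ilt1 // ltW.
split; first by rewrite !addn1 (qbinom_hockey_stick_l qX_neq1).
pose G j k := qbinom q (n + m - j - k) m * q ^+ (n - (j + k)).
rewrite (triangle_sum_symmetrize _ _ G (fun j => q ^+ ((m + 2) * j)));
  last by move=> j k; rewrite /G subnAC [(j + k)%N]addnC.
rewrite !addn2 -addnS (qbinom_hockey_stick_l qX_neq1); apply: eq_bigr => j _.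
have le_jn : (j <= n)%N by rewrite -ltnS.
rewrite -mulr_suml mulrC triangle_row_sum //; congr (_ * _).
have -> : (n + m.+1 - j = (n - j + m).+1)%N by lia.
rewrite (qbinom_hockey_stick_r qX_neq1); apply: eq_bigr => k _.
by rewrite mulrC /G subnDA; congr (qbinom _ _ _ * _); lia.
Qed.
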